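(* Let $\lambda$ be a partition of $n$ with largest part $\lambda_1$, and let $m\ge n-(\lambda_1-1)$. Then there is a bijection between $\mathrm{QYT}_{\le m}(\lambda)$ and the set $\mathrm{SYT}(\lambda)$ of standard Young tableaux of shape $\lambda$; in particular $|\mathrm{QYT}_{\le m}(\lambda)|=|\mathrm{SYT}(\lambda)|$.
   Context: A partition $\lambda=(\lambda_1\ge\lambda_2\ge\cdots\ge\lambda_k>0)$ of $n$ has length $\ell(\lambda)=k$ and size $n=\sum_i\lambda_i$. Its (French) Young diagram has $\lambda_j$ left-justified boxes in row $j$, rows numbered from bottom to top. A semistandard Young tableau (SSYT) of shape $\lambda$ is a filling of the boxes with positive integers that weakly increase from left to right along rows and strictly increase from bottom to top along columns. A standard Young tableau of shape $\lambda$ is an SSYT using each of $1,\dots,n$ exactly once. An SSYT $T$ is quasi-Yamanouchi if for every integer $i>1$ that appears in $T$, the leftmost occurrence of $i$ lies in a column weakly left of (i.e. with column index $\le$ that of) some occurrence of $i-1$ in $T$. $\mathrm{QYT}_{\le m}(\lambda)$ denotes the set of quasi-Yamanouchi tableaux of shape $\lambda$ all of whose entries are at most $m$. *)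

From mathcomp Require Import all_boot.
Set Implicit Arguments. Unset Strict Implicit. Unset Printing Implicit Defensive.

Definition is_partition (la : seq nat) : bool :=
  sorted geq la && all (fun p => 0 < p) la.

(* A tableau (French convention) is a sequence of rows, row 0 being the
   bottom row; the entry in row r and column c is [entry T r c]. *)
Definition tableau := seq (seq nat).

Definition entry (T : tableau) (r c : nat) : nat := nth 0 (nth [::] T r) c.

Definition has_shape (la : seq nat) (T : tableau) : bool :=
  map size T == la.

Definition is_box (T : tableau) (r c : nat) : Prop :=
  r < size T /\ c < size (nth [::] T r).

Definition is_SSYT (la : seq nat) (T : tableau) : Prop :=
  [/\ has_shape la T,
      (forall r c, is_box T r c -> 0 < entry T r c),
      (forall r c, is_box T r c.+1 -> entry T r c <= entry T r c.+1) &
      (forall r c, is_box T r.+1 c -> entry T r c < entry T r.+1 c)].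

Definition is_SYT (la : seq nat) (T : tableau) : Prop :=
  is_SSYT la T /\ perm_eq (flatten T) (iota 1 (sumn la)).

Definition appears (T : tableau) (i : nat) : Prop :=
  exists r c, is_box T r c /\ entry T r c = i.

Definition is_quasi_yamanouchi (T : tableau) : Prop :=
  forall i, 1 < i -> appears T i ->
    exists r c,
      [/\ is_box T r c, entry T r c = i,
          (forall r2 c2, is_box T r2 c2 -> entry T r2 c2 = i -> c <= c2) &
          exists r' c', [/\ is_box T r' c', entry T r' c' = i.-1 & c <= c']].

Definition is_QYT_le (m : nat) (la : seq nat) (T : tableau) : Prop :=
  [/\ is_SSYT la T, is_quasi_yamanouchi T &
      (forall r c, is_box T r c -> entry T r c <= m)].

From mathcomp Require Import all_boot zify.
From Stdlib Require Import ProofIrrelevance.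
Set Implicit Arguments. Unset Strict Implicit. Unset Printing Implicit Defensive.

(* Standardization relabels the entries of an SSYT by 1, ..., n, ordering
   them by value and breaking ties from left to right; the result is an SYT.
   Conversely, an SYT S is destandardized by giving each entry the value
   1 + (number of descents of S below it), where i is a descent when i + 1
   lies in a strictly higher row.  Between consecutive descents the entries
   of S move strictly to the right, which makes the destandardization an
   SSYT that standardizes back to S; its minimal occurrences of each value
   come right after a descent, which is exactly the quasi-Yamanouchi
   condition.  Every descent i is witnessed by the box of i + 1 above the
   bottom row, so at most n - lambda_1 values besides 1 occur and the
   destandardization lies in QYT_{<= m}.  Finally a quasi-Yamanouchi SSYT
   is recovered from its standardization, because the QY condition forces
   a value change between consecutive standardized entries to be a
   descent. *)

Lemma sub_in_count (T : eqType) (a b : pred T) s :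
  {in s, forall x, a x -> b x} -> count a s <= count b s.
Proof.
elim: s => [|x s IH] //= sub_ab.
have ab_x : a x -> b x by apply: sub_ab; rewrite inE eqxx.
have : count a s <= count b s by apply: IH => w ws; apply: sub_ab; rewrite inE ws orbT.
by case: (a x) (b x) ab_x => [] [] //= ab_x; [move: (ab_x isT) | lia].
Qed.

Lemma sub_in_count_ltn (T : eqType) (a b : pred T) s :
  {in s, forall x, a x -> b x} -> (exists2 x, x \in s & b x && ~~ a x) ->
  count a s < count b s.
Proof.
elim: s => [|x s IH] sub_ab [w] //.
have ab_x : a x -> b x by apply: sub_ab; rewrite inE eqxx.
have sub_ab_s : {in s, forall x, a x -> b x}.
  by move=> u us; apply: sub_ab; rewrite inE us orbT.
rewrite inE => /orP [/eqP -> | ws] bw /=.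
  by have := sub_in_count sub_ab_s; case/andP: bw => -> /negbTE -> /=; lia.
have := IH sub_ab_s (ex_intro2 _ _ w ws bw).
by case: (a x) (b x) ab_x => [] [] //= ab_x; [move: (ab_x isT) | lia].
Qed.

Lemma uniq_map_inj_in (T1 T2 : eqType) (f : T1 -> T2) s :
  uniq (map f s) -> {in s &, injective f}.
Proof.
elim: s => [|a s IH] //= /andP [fa_notin uniq_fs] x y.
rewrite !inE => /orP [/eqP -> | xs] /orP [/eqP -> | ys] // fxy.
- by move: fa_notin; rewrite fxy map_f.
- by move: fa_notin; rewrite -fxy map_f.
- exact: IH.
Qed.

Lemma count_ltn_iota v a k : count (fun j => j < v) (iota a k) = minn k (v - a).
Proof. by elim: k a => [|k IH] a /=; [rewrite min0n | rewrite IH; case: ltnP; lia]. Qed.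

Definition entry_fun (T : tableau) (x : nat * nat) : nat := entry T x.1 x.2.

(* Tableaux of shape la are handled as functions on the cells (row, column)
   of the diagram of la; [tableau_of la f] lists the values of f row by row. *)
Section Diagram.
Variable la : seq nat.

Definition in_diagram (x : nat * nat) : bool :=
  (x.1 < size la) && (x.2 < nth 0 la x.1).

Definition cells : seq (nat * nat) :=
  [seq (r, c) | r <- iota 0 (size la), c <- iota 0 (nth 0 la r)].

Definition tableau_of (f : nat * nat -> nat) : tableau :=
  [seq [seq f (r, c) | c <- iota 0 (nth 0 la r)] | r <- iota 0 (size la)].

Lemma mem_cells x : (x \in cells) = in_diagram x.
Proof.
apply/allpairsPdep/idP => [[r [c [r_lt c_lt ->]]] | ].
  by move: r_lt c_lt; rewrite !mem_iota /in_diagram /= => -> ->.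
by case: x => r c /andP [r_lt c_lt]; exists r, c; rewrite !mem_iota.
Qed.

Lemma cells_uniq : uniq cells.
Proof.
apply: allpairs_uniq_dep => [|r _|]; try exact: iota_uniq.
by move=> [a b] [a' b'] _ _ [-> ->].
Qed.

Lemma size_cells : size cells = sumn la.
Proof.
rewrite size_allpairs_dep (eq_map (fun r => size_iota 0 (nth 0 la r))).
by rewrite -/(mkseq _ _) mkseq_nth.
Qed.

Lemma has_shape_tableau_of f : has_shape la (tableau_of f).
Proof.
apply/eqP; rewrite -map_comp (eq_map (g := nth 0 la)) => [|r /=].
  by rewrite -/(mkseq _ _) mkseq_nth.
by rewrite size_map size_iota.
Qed.

Lemma is_box_in_diagram T r c : has_shape la T -> is_box T r c <-> in_diagram (r, c).
Proof.
move/eqP=> shT; rewrite /is_box /in_diagram -shT /= size_map.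
by split=> [[r_lt] | /andP [r_lt]]; rewrite (nth_map [::]) // => ->; rewrite ?r_lt.
Qed.

Lemma is_box_tableau_of f r c : is_box (tableau_of f) r c <-> in_diagram (r, c).
Proof. exact/is_box_in_diagram/has_shape_tableau_of. Qed.

Lemma entry_tableau_of f r c : in_diagram (r, c) -> entry (tableau_of f) r c = f (r, c).
Proof.
case/andP=> /= r_lt c_lt.
by rewrite /entry (nth_map 0) ?size_iota // nth_iota // (nth_map 0) ?size_iota // nth_iota.
Qed.

Lemma tableau_of_entry_fun T : has_shape la T -> tableau_of (entry_fun T) = T.
Proof.
move=> /eqP shT; have sizeT : size T = size la by rewrite -shT size_map.
apply: (eq_from_nth (x0 := [::])) => [|r]; first by rewrite size_map size_iota sizeT.
rewrite size_map size_iota => r_lt; rewrite (nth_map 0) ?size_iota // nth_iota //.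
have size_row : size (nth [::] T r) = nth 0 la r by rewrite -shT (nth_map [::]) ?sizeT.
apply: (eq_from_nth (x0 := 0)) => [|c]; first by rewrite size_map size_iota.
by rewrite size_map size_iota => c_lt; rewrite (nth_map 0) ?size_iota // nth_iota.
Qed.

Lemma eq_in_tableau_of f g : {in in_diagram, f =1 g} -> tableau_of f = tableau_of g.
Proof.
move=> fg; apply/eq_in_map => r; rewrite mem_iota => /andP [_ r_lt].
apply/eq_in_map => c; rewrite mem_iota => /andP [_ c_lt].
by apply: fg; rewrite /in_mem /= /in_diagram /= r_lt.
Qed.

Lemma flatten_tableau_of f : flatten (tableau_of f) = map f cells.
Proof.
by rewrite map_flatten -map_comp; congr flatten; apply: eq_map => r /=; rewrite -map_comp.
Qed.

End Diagram.

Lemma count_cells_above_bottom la :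
  count (fun x => 0 < x.1) (cells la) = sumn la - head 0 la.
Proof.
case: la => [|a l] //.
rewrite /cells /= count_cat count_map (eq_count (a2 := pred0)) // count_pred0.
rewrite (eq_in_count (a2 := predT)) ?count_predT ?size_allpairs_dep; last first.
  by move=> x /allpairsPdep [r [c [r_in _ ->]]]; move: r_in; rewrite mem_iota /=; lia.
rewrite (iotaDl 1 0) -map_comp (eq_map (g := nth 0 l)) => [|r /=]; last exact: size_iota.
by rewrite -/(mkseq _ _) mkseq_nth addKn.
Qed.

Section Partition.
Variable la : seq nat.
Hypothesis la_partition : is_partition la.
Local Notation in_diagram := (in_diagram la).
Local Notation cells := (cells la).
Local Notation n := (sumn la).

Lemma in_diagram_down r r' c : in_diagram (r, c) -> r' <= r -> in_diagram (r', c).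
Proof.
case/andP=> /= r_lt c_lt le_r'r; have r'_lt := leq_ltn_trans le_r'r r_lt.
apply/andP; split=> //=; apply: leq_trans c_lt _.
case/andP: la_partition => la_sorted _.
have geq_trans : transitive geq by move=> a b d /= ba db; exact: leq_trans db ba.
exact: (sorted_leq_nth geq_trans (fun x => leqnn x) 0 la_sorted).
Qed.

Lemma in_diagram_left r c c' : in_diagram (r, c) -> c' <= c -> in_diagram (r, c').
Proof. by case/andP=> r_lt c_lt le_c'c; rewrite /in_diagram r_lt (leq_ltn_trans le_c'c). Qed.

Lemma in_diagram_below_left x y : in_diagram y -> x.1 <= y.1 -> x.2 <= y.2 -> in_diagram x.
Proof.
by case: x y => [a b] [a' b'] /= y_in ? ?; apply: in_diagram_left (in_diagram_down y_in _) _.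
Qed.

Definition ssyt_fun (f : nat * nat -> nat) :=
  [/\ forall x, in_diagram x -> 0 < f x,
      forall r c, in_diagram (r, c.+1) -> f (r, c) <= f (r, c.+1) &
      forall r c, in_diagram (r.+1, c) -> f (r, c) < f (r.+1, c)].

Definition syt_fun (f : nat * nat -> nat) :=
  ssyt_fun f /\ perm_eq (map f cells) (iota 1 n).

Definition qy_fun (f : nat * nat -> nat) :=
  forall i, 1 < i -> (exists2 x, in_diagram x & f x = i) ->
  exists x, [/\ in_diagram x, f x = i,
     (forall y, in_diagram y -> f y = i -> x.2 <= y.2) &
     exists2 y, in_diagram y & f y = i.-1 /\ x.2 <= y.2].

Lemma ssyt_fun_mono f x y : ssyt_fun f -> in_diagram y ->
  x.1 <= y.1 -> x.2 <= y.2 -> f x + (y.1 - x.1) <= f y.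
Proof.
case: x y => [a b] [a' b'] /= [_ f_row f_col].
have row_mono r c c' : in_diagram (r, c') -> c <= c' -> f (r, c) <= f (r, c').
  elim: c' => [|c' IH] in_c'; first by rewrite leqn0 => /eqP ->.
  rewrite leq_eqVlt => /orP [/eqP -> // | /IH le_c].
  exact: leq_trans (le_c (in_diagram_left in_c' _)) (f_row _ _ in_c').
have col_mono r r' c : in_diagram (r', c) -> r <= r' -> f (r, c) + (r' - r) <= f (r', c).
  elim: r' => [|r' IH] in_r'; first by rewrite leqn0 => /eqP ->; rewrite addn0.
  rewrite leq_eqVlt => /orP [/eqP -> | /IH le_r]; first by rewrite subnn addn0.
  by have := le_r (in_diagram_down in_r' (leqnSn r')); have := f_col _ _ in_r'; lia.
move=> y_in le_a le_b; have := col_mono a a' b' y_in le_a.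
by have := row_mono a b b' (in_diagram_down y_in le_a) le_b; lia.
Qed.

Lemma ssyt_fun_le f x y : ssyt_fun f -> in_diagram y -> x.1 <= y.1 -> x.2 <= y.2 -> f x <= f y.
Proof. by move=> f_ssyt y_in le1 le2; have := ssyt_fun_mono f_ssyt y_in le1 le2; lia. Qed.

Lemma ssyt_fun_lt f x y : ssyt_fun f -> in_diagram y -> x.1 < y.1 -> x.2 <= y.2 -> f x < f y.
Proof. by move=> f_ssyt y_in lt1 le2; have := ssyt_fun_mono f_ssyt y_in (ltnW lt1) le2; lia. Qed.

(** * Standardization *)

Definition std_lt (f : nat * nat -> nat) y x :=
  (f y < f x) || ((f y == f x) && (y.2 < x.2)).

Lemma std_lt_irr f x : std_lt f x x = false.
Proof. by rewrite /std_lt !ltnn andbF. Qed.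

Lemma std_lt_trans f x y z : std_lt f x y -> std_lt f y z -> std_lt f x z.
Proof.
rewrite /std_lt => /orP [xy | /andP [/eqP xy col_xy]] /orP [yz | /andP [/eqP yz col_yz]];
  apply/orP; [left | left | left | right]; rewrite ?xy ?yz ?eqxx /=; lia.
Qed.

Lemma std_lt_asym f x y : std_lt f x y -> std_lt f y x = false.
Proof.
rewrite /std_lt => /orP [xy | /andP [/eqP xy col_xy]];
  apply/negP => /orP [yx | /andP [/eqP yx col_yx]]; lia.
Qed.

(* Equal entries of an SSYT lie in distinct columns. *)
Lemma std_lt_total f x y : ssyt_fun f -> in_diagram x -> in_diagram y -> x != y ->
  std_lt f x y || std_lt f y x.
Proof.
move=> f_ssyt x_in y_in; rewrite /std_lt.
case: (ltngtP (f x) (f y)) => // fxy; rewrite ?orbT //=.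
case: (ltngtP x.2 y.2) => // col_xy; rewrite ?orbT //.
case: x y x_in y_in fxy col_xy => [a b] [a' b'] /= x_in y_in fxy eq_col; subst b'.
case: (ltngtP a a') => [lt_a|lt_a|->]; last by rewrite eqxx.
- by have := @ssyt_fun_lt f (a, b) (a', b) f_ssyt y_in lt_a (leqnn _); rewrite fxy ltnn.
- by have := @ssyt_fun_lt f (a', b) (a, b) f_ssyt x_in lt_a (leqnn _); rewrite fxy ltnn.
Qed.

Definition std_rank f x := count (fun y => std_lt f y x) cells.

Definition standardize f x := (std_rank f x).+1.

Lemma std_rank_lt f x y : in_diagram y -> std_lt f y x -> std_rank f y < std_rank f x.
Proof.
move=> y_in yx; apply: sub_in_count_ltn => [w _ wy|]; first exact: std_lt_trans wy yx.
by exists y; rewrite ?mem_cells // yx std_lt_irr.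
Qed.

Lemma std_rank_ltn f x : in_diagram x -> std_rank f x < n.
Proof.
move=> x_in; rewrite -size_cells -count_predT; apply: sub_in_count_ltn => //.
by exists x; rewrite ?mem_cells // std_lt_irr.
Qed.

Lemma std_lt_of_rank f x y : ssyt_fun f -> in_diagram x -> in_diagram y ->
  std_rank f y < std_rank f x -> std_lt f y x.
Proof.
move=> f_ssyt x_in y_in lt_rank; case: (eqVneq y x) => [yx | neq_yx].
  by move: lt_rank; rewrite yx ltnn.
case/orP: (std_lt_total f_ssyt y_in x_in neq_yx) => // /(std_rank_lt x_in).
by rewrite ltnNge (ltnW lt_rank).
Qed.

Lemma std_rank_inj f : ssyt_fun f -> {in in_diagram &, injective (std_rank f)}.
Proof.
move=> f_ssyt x y x_in y_in rank_xy; apply/eqP/negP => /negP neq_xy.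
by case/orP: (std_lt_total f_ssyt x_in y_in neq_xy) => [/(std_rank_lt x_in) | /(std_rank_lt y_in)];
  rewrite rank_xy ltnn.
Qed.

Lemma standardize_ssyt f : ssyt_fun f -> ssyt_fun (standardize f).
Proof.
move=> f_ssyt; have [_ f_row f_col] := f_ssyt; split=> // r c in_rc; rewrite ltnS.
  apply/ltnW/std_rank_lt; first exact: in_diagram_left in_rc (leqnSn c).
  rewrite /std_lt /= ltnSn andbT orbC -leq_eqVlt; exact: f_row.
by apply: std_rank_lt; [exact: in_diagram_down in_rc (leqnSn r) | rewrite /std_lt f_col].
Qed.

Lemma standardize_syt f : ssyt_fun f -> syt_fun (standardize f).
Proof.
move=> f_ssyt; split; first exact: standardize_ssyt.
have -> : map (standardize f) cells = map succn (map (std_rank f) cells) by rewrite -map_comp.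
have -> : iota 1 n = map succn (iota 0 n) by rewrite (iotaDl 1 0).
apply: perm_map.
have rank_uniq : uniq (map (std_rank f) cells).
  by rewrite map_inj_in_uniq ?cells_uniq // => x y; rewrite !mem_cells; exact: std_rank_inj.
have sub_iota : {subset map (std_rank f) cells <= iota 0 n}.
  by move=> k /mapP [x]; rewrite mem_cells => x_in ->; rewrite mem_iota; exact: std_rank_ltn.
have size_le : size (iota 0 n) <= size (map (std_rank f) cells).
  by rewrite size_map size_cells size_iota.
have [_ same_mem] := uniq_min_size rank_uniq sub_iota size_le.
exact: uniq_perm rank_uniq (iota_uniq 0 n) same_mem.
Qed.

(** * Destandardization *)

Section Destandardization.
Variable S : nat * nat -> nat.
Hypothesis S_syt : syt_fun S.

Lemma syt_fun_inj : {in in_diagram &, injective S}.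
Proof.
move=> x y x_in y_in; apply: (@uniq_map_inj_in _ _ S cells); rewrite ?mem_cells //.
by case: S_syt => _ /perm_uniq ->; exact: iota_uniq.
Qed.

Lemma syt_fun_range x : in_diagram x -> 0 < S x <= n.
Proof.
move=> x_in; case: S_syt => _ /perm_mem /(_ (S x)).
by rewrite map_f ?mem_cells // mem_iota => /esym; lia.
Qed.

Lemma syt_fun_surj v : 0 < v <= n -> exists2 x, in_diagram x & S x = v.
Proof.
move=> v_range; case: S_syt => _ /perm_mem /(_ v).
rewrite mem_iota (_ : (1 <= v < 1 + n) = true); last lia.
by case/mapP=> x; rewrite mem_cells => x_in ->; exists x.
Qed.

Lemma count_syt_fun_ltn v : v <= n.+1 -> count (fun y => S y < v) cells = v.-1.
Proof.
move=> le_v; case: S_syt => _ /permP /(_ (fun j => j < v)).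
by rewrite count_map => ->; rewrite count_ltn_iota; lia.
Qed.

Lemma syt_fun_lt x y : in_diagram y -> x.1 <= y.1 -> x.2 <= y.2 -> x != y -> S x < S y.
Proof.
move=> y_in le1 le2 neq_xy; have x_in := in_diagram_below_left y_in le1 le2.
rewrite ltn_neqAle (ssyt_fun_le S_syt.1 y_in le1 le2) andbT.
by apply: contra neq_xy => /eqP /(syt_fun_inj x_in y_in) ->.
Qed.

Lemma succ_up_weakly_left x y : in_diagram x -> in_diagram y ->
  S y = (S x).+1 -> x.1 < y.1 -> y.2 <= x.2.
Proof.
move=> x_in y_in Sy lt1; rewrite leqNgt; apply/negP => lt2.
have corner_in : in_diagram (x.1, y.2) by apply: in_diagram_below_left y_in _ _ => //=; exact: ltnW.
have lt_corner : S x < S (x.1, y.2).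
  apply: syt_fun_lt => //=; first exact: ltnW.
  by apply: contraTneq lt2 => ->; rewrite ltnn.
have : S (x.1, y.2) < S y by apply: (@ssyt_fun_lt S (x.1, y.2) y) => //; case: S_syt.
lia.
Qed.

Lemma succ_weakly_down_right x y : in_diagram x -> in_diagram y ->
  S y = (S x).+1 -> y.1 <= x.1 -> x.2 < y.2.
Proof.
move=> x_in y_in Sy le1; rewrite ltnNge; apply/negP => le2.
have neq_yx : y != x by apply/eqP => yx; move: Sy; rewrite yx; lia.
by have := syt_fun_lt x_in le1 le2 neq_yx; lia.
Qed.

Definition descent y := has (fun z => (S z == (S y).+1) && (y.1 < z.1)) cells.

Definition descents_below v := count (fun y => (S y < v) && descent y) cells.

Definition destandardize x := (descents_below (S x)).+1.

Lemma descentE y z : in_diagram y -> in_diagram z -> S z = (S y).+1 -> descent y = (y.1 < z.1).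
Proof.
move=> y_in z_in Sz; apply/hasP/idP => [[z' z'_in /andP [/eqP Sz' lt1]] | lt1].
  rewrite mem_cells in z'_in.
  by rewrite (@syt_fun_inj z z') // Sz Sz'.
by exists z; rewrite ?mem_cells // Sz eqxx.
Qed.

Lemma descents_below_succ y : in_diagram y ->
  descents_below (S y).+1 = descents_below (S y) + descent y.
Proof.
move=> y_in; pose at_y := fun w => (w == y) && descent y.
have -> : descents_below (S y).+1 =
    count (predU (fun w => (S w < S y) && descent w) at_y) cells.
  apply: eq_in_count => w; rewrite mem_cells /at_y /= => w_in.
  case: (eqVneq w y) => [->|neq_wy]; first by rewrite ltnSn ltnn.
  rewrite ltnS leq_eqVlt orbF; case: (S w =P S y) => [/(syt_fun_inj w_in y_in) wy|] //=.
  by rewrite wy eqxx in neq_wy.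
have disjoint : count (predI (fun w => (S w < S y) && descent w) at_y) cells = 0.
  rewrite (eq_count (a2 := pred0)) ?count_pred0 // => w.
  by rewrite /= /at_y; case: eqVneq => [->|]; rewrite ?ltnn ?andbF.
rewrite -[LHS]addn0 -disjoint count_predUI; congr (_ + _); rewrite /at_y; case: (descent y) => /=.
  rewrite (eq_count (a2 := pred1 y)) => [|w]; last by rewrite andbT.
  by rewrite count_uniq_mem ?cells_uniq ?mem_cells ?y_in.
by rewrite (eq_count (a2 := pred0)) ?count_pred0 // => w; rewrite andbF.
Qed.

Lemma leq_descents_below v w : v <= w -> descents_below v <= descents_below w.
Proof.
by move=> le_vw; apply: sub_in_count => u _ /andP [lt_u ->]; rewrite andbT (leq_trans lt_u).
Qed.

Lemma descents_below_leq v : v <= n.+1 -> descents_below v <= v.-1.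
Proof.
by move=> le_v; rewrite -count_syt_fun_ltn //; apply: sub_in_count => u _ /andP [].
Qed.

Lemma descents_below_ltn u v w : in_diagram u -> v <= S u -> S u < w -> descent u ->
  descents_below v < descents_below w.
Proof.
move=> u_in le_v lt_w des_u; apply: sub_in_count_ltn => [x _ /andP [lt_x ->]|].
  by rewrite andbT (leq_trans lt_x) // ltnW // (leq_ltn_trans le_v).
by exists u; rewrite ?mem_cells // lt_w des_u !andbT /= -leqNgt.
Qed.

Lemma col_lt_of_no_descent y z : in_diagram y -> in_diagram z -> S y < S z ->
  (forall u, in_diagram u -> S y <= S u -> S u < S z -> ~~ descent u) -> y.2 < z.2.
Proof.
move=> y_in z_in lt_yz; have [k Sz] : exists k, S z = S y + k.+1 by exists (S z - S y).-1; lia.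
elim: k z z_in lt_yz Sz => [|k IH] z z_in lt_yz Sz no_descent.
  have Sz1 : S z = (S y).+1 by rewrite Sz addn1.
  have := no_descent y y_in (leqnn _) lt_yz.
  by rewrite (descentE y_in z_in Sz1) -leqNgt; exact: succ_weakly_down_right.
have [w w_in Sw] : exists2 w, in_diagram w & S w = S y + k.+1.
  by apply: syt_fun_surj; have := syt_fun_range z_in; lia.
have lt_yw : y.2 < w.2.
  by apply: IH => // [|u u_in le_u lt_u]; [lia | apply: no_descent => //; lia].
have Sz1 : S z = (S w).+1 by lia.
have := no_descent w w_in ltac:(lia) ltac:(lia).
rewrite (descentE w_in z_in Sz1) -leqNgt => /(succ_weakly_down_right w_in z_in Sz1).
exact: ltn_trans lt_yw.
Qed.

Lemma col_lt_of_destandardize_eq y z : in_diagram y -> in_diagram z -> S y < S z ->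
  destandardize y = destandardize z -> y.2 < z.2.
Proof.
move=> y_in z_in lt_yz [eq_yz]; apply: col_lt_of_no_descent => // u u_in le_u lt_u.
by apply/negP => /(descents_below_ltn u_in le_u lt_u); rewrite eq_yz ltnn.
Qed.

Lemma destandardize_ssyt : ssyt_fun destandardize.
Proof.
split=> // r c in_rc; rewrite /destandardize ltnS.
  by apply/leq_descents_below/ltnW/syt_fun_lt => //=; apply/negP => /eqP []; lia.
have in_below : in_diagram (r, c) := in_diagram_down in_rc (leqnSn r).
have lt_S : S (r, c) < S (r.+1, c).
  by apply: syt_fun_lt => //=; apply/negP => /eqP []; lia.
rewrite ltn_neqAle leq_descents_below ?(ltnW lt_S) // andbT.
apply/eqP => eq_d; have := col_lt_of_destandardize_eq in_below in_rc lt_S.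
by rewrite /destandardize eq_d ltnn => /(_ erefl).
Qed.

Lemma std_lt_destandardize y x : in_diagram x -> in_diagram y ->
  std_lt destandardize y x = (S y < S x).
Proof.
have lt_std u v : in_diagram u -> in_diagram v -> S v < S u -> std_lt destandardize v u.
  move=> u_in v_in lt_vu; rewrite /std_lt /destandardize !ltnS eqSS.
  have := leq_descents_below (ltnW lt_vu); rewrite leq_eqVlt => /orP [/eqP eq_d | ->] //.
  by rewrite eq_d eqxx ltnn col_lt_of_destandardize_eq // /destandardize eq_d.
move=> x_in y_in; apply/idP/idP; last exact: lt_std.
case: (ltngtP (S y) (S x)) => // [lt_xy | eq_xy] yx.
  by have := lt_std y x y_in x_in lt_xy; rewrite std_lt_asym.
by move: yx; rewrite (syt_fun_inj y_in x_in eq_xy) std_lt_irr.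
Qed.

Lemma standardize_destandardize : {in in_diagram, standardize destandardize =1 S}.
Proof.
move=> x x_in; rewrite /standardize /std_rank.
rewrite (eq_in_count (a2 := fun y => S y < S x)) => [|y]; last first.
  by rewrite mem_cells => y_in; exact: std_lt_destandardize.
by rewrite count_syt_fun_ltn; have := syt_fun_range x_in; lia.
Qed.

(* A descent y is witnessed by the box of S y + 1, which lies above the bottom row. *)
Lemma destandardize_bound x : in_diagram x -> destandardize x <= (n - head 0 la).+1.
Proof.
move=> x_in; rewrite /destandardize ltnS -count_cells_above_bottom.
apply: leq_trans (sub_in_count (b := descent) _) _ => [u _ /andP [] //|].
rewrite -!size_filter -[size (filter descent _)](size_map (fun y => (S y).+1)).
rewrite -[size (filter _ _)](size_map S); apply: uniq_leq_size.
  rewrite map_inj_in_uniq ?filter_uniq ?cells_uniq // => a b.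
  rewrite !mem_filter !mem_cells => /andP [_ a_in] /andP [_ b_in] [].
  exact: syt_fun_inj.
move=> v /mapP [y]; rewrite mem_filter mem_cells.
case/andP=> /hasP [z z_in /andP [/eqP Sz lt1]] y_in ->.
by rewrite -Sz map_f // mem_filter z_in andbT (leq_ltn_trans _ lt1).
Qed.

(* The leftmost occurrence of a value i is the one with smallest S; the entry
   of S just before it is a descent, hence has value i - 1 and lies weakly
   to its right. *)
Lemma destandardize_qy : qy_fun destandardize.
Proof.
move=> i lt1i [x0 x0_in dx0].
have has_i : exists k, has (fun z => (S z == k) && (destandardize z == i)) cells.
  by exists (S x0); apply/hasP; exists x0; rewrite ?mem_cells // eqxx dx0 eqxx.
case: (ex_minnP has_i) => k /hasP [z z_in /andP [/eqP Sz /eqP dz]] k_min.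
rewrite mem_cells in z_in; rewrite -Sz in k_min.
have S_min w : in_diagram w -> destandardize w = i -> S z <= S w.
  by move=> w_in dw; apply: k_min; apply/hasP; exists w; rewrite ?mem_cells // eqxx dw eqxx.
exists z; split=> // [w w_in dw|].
  case: (eqVneq w z) => [-> //| neq_wz].
  have lt_zw : S z < S w.
    rewrite ltn_neqAle S_min // andbT; apply: contra neq_wz => /eqP Szw.
    by rewrite (syt_fun_inj w_in z_in (esym Szw)).
  by apply/ltnW/col_lt_of_destandardize_eq; rewrite ?dz.
have lt1Sz : 1 < S z.
  have := syt_fun_range z_in => /andP [_ le_Sz].
  have := descents_below_leq (leqW le_Sz); move: dz; rewrite /destandardize; lia.
have [y y_in Sy] : exists2 y, in_diagram y & S y = (S z).-1.
  by apply: syt_fun_surj; have := syt_fun_range z_in; lia.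
have Sz1 : S z = (S y).+1 by lia.
have d_succ := descents_below_succ y_in; rewrite -Sz1 in d_succ.
have des_y : descent y.
  apply/negPn/negP => /negbTE no_des; have := S_min y y_in.
  by rewrite -dz /destandardize d_succ no_des addn0 Sz1 ltnn => /(_ erefl).
exists y => //; split; first by rewrite -dz /destandardize d_succ des_y addn1.
by apply: succ_up_weakly_left; rewrite // -(descentE y_in z_in Sz1).
Qed.

End Destandardization.

Section QuasiYamanouchi.
Variable T : nat * nat -> nat.
Hypotheses (T_ssyt : ssyt_fun T) (T_qy : qy_fun T).
Local Notation S := (standardize T).
Local Notation S_syt := (standardize_syt T_ssyt).

Lemma qy_std_min x : in_diagram x -> S x = 1 -> T x = 1.
Proof.
move=> x_in [rank0]; have [T_pos _ _] := T_ssyt.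
have := T_pos x x_in; rewrite leq_eqVlt => /orP [/eqP -> // | lt1].
have [_ [_ _ _ [y y_in [Ty _]]]] := T_qy lt1 (ex_intro2 _ _ x x_in erefl).
have : std_lt T y x by rewrite /std_lt Ty; apply/orP; left; lia.
by move/(std_rank_lt y_in); rewrite rank0.
Qed.

(* Between standardized neighbours y, x the value of T increases by at most
   one: a larger gap would contradict the quasi-Yamanouchi condition for T x. *)
Lemma qy_std_succ y x : in_diagram x -> in_diagram y ->
  S x = (S y).+1 -> T x = T y + descent S y.
Proof.
move=> x_in y_in Sx; have [rank_x] := Sx.
have yx : std_lt T y x by apply: std_lt_of_rank => //; rewrite rank_x.
have between u : in_diagram u -> std_lt T y u -> std_lt T u x -> False.
  by move=> u_in /(std_rank_lt y_in) + /(std_rank_lt u_in); rewrite rank_x /standardize; lia.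
rewrite (descentE S_syt y_in x_in Sx).
case/orP: yx => [lt_T | /andP [/eqP eq_T lt_col]].
  have lt1 : 1 < T x by have [T_pos _ _] := T_ssyt; have := T_pos y y_in; lia.
  have [x0 [x0_in Tx0 x0_min [w w_in [Tw le_col]]]] := T_qy lt1 (ex_intro2 _ _ x x_in erefl).
  have Tw_y : T w = T y.
    case: (ltnP (T y) (T w)) => [lt_yw | ]; last lia.
    by case: (between w w_in); rewrite /std_lt ?lt_yw //; apply/orP; left; lia.
  have le_x_x0 : x.2 <= x0.2.
    rewrite leqNgt; apply/negP => lt_x0; apply: (between x0 x0_in).
      by rewrite /std_lt Tx0 lt_T.
    by rewrite /std_lt Tx0 eqxx lt_x0 orbT.
  have le_w_y : w.2 <= y.2.
    rewrite leqNgt; apply/negP => lt_y; apply: (between w w_in).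
      by rewrite /std_lt Tw_y eqxx lt_y orbT.
    by rewrite /std_lt Tw_y lt_T.
  have lt_row : y.1 < x.1.
    rewrite ltnNge; apply/negP => le_row.
    have := ssyt_fun_le T_ssyt y_in le_row (leq_trans le_x_x0 (leq_trans le_col le_w_y)).
    lia.
  by rewrite lt_row; lia.
rewrite eq_T; case: ltnP => [lt_row | _]; last by rewrite addn0.
have corner_in : in_diagram (y.1, x.2) := @in_diagram_down x.1 y.1 x.2 x_in (ltnW lt_row).
have := @ssyt_fun_le T y (y.1, x.2) T_ssyt corner_in (leqnn _) (ltnW lt_col).
have := @ssyt_fun_lt T (y.1, x.2) x T_ssyt x_in lt_row (leqnn _).
lia.
Qed.

Lemma destandardize_standardize : {in in_diagram, destandardize S =1 T}.
Proof.
suff dT k x : in_diagram x -> S x = k.+1 -> destandardize S x = T x.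
  by move=> x x_in; exact: dT.
elim: k x => [|k IH] x x_in Sx.
  rewrite qy_std_min // /destandardize Sx; apply/eqP; rewrite eqSS -leqn0.
  exact: descents_below_leq S_syt 1 isT.
have [y y_in Sy] : exists2 y, in_diagram y & S y = k.+1.
  by apply: (syt_fun_surj S_syt); have := syt_fun_range S_syt x_in; lia.
have Sx1 : S x = (S y).+1 by rewrite Sx Sy.
rewrite (qy_std_succ x_in y_in Sx1) -(IH y y_in Sy) /destandardize Sx1.
by rewrite (descents_below_succ S_syt y_in) addSn.
Qed.

End QuasiYamanouchi.

End Partition.

Section Tableaux.
Variable la : seq nat.
Hypothesis la_partition : is_partition la.
Local Notation in_diagram := (in_diagram la).
Local Notation tableau_of := (tableau_of la).

Lemma is_SSYT_tableau_of f : is_SSYT la (tableau_of f) <-> ssyt_fun la f.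
Proof.
have entry_f r c : in_diagram (r, c) -> entry (tableau_of f) r c = f (r, c).
  exact: entry_tableau_of.
have in_left r c : in_diagram (r, c.+1) -> in_diagram (r, c).
  by move/in_diagram_left; apply.
have in_down r c : in_diagram (r.+1, c) -> in_diagram (r, c).
  by move/(in_diagram_down la_partition); apply.
split=> [[_ T_pos T_row T_col] | [f_pos f_row f_col]].
  split=> [[r c] rc_in | r c rc_in | r c rc_in].
  - by rewrite -entry_f //; apply/T_pos/is_box_tableau_of.
  - rewrite -(entry_f r c) ?(in_left _ _ rc_in) // -entry_f //.
    exact/T_row/is_box_tableau_of.
  - rewrite -(entry_f r c) ?(in_down _ _ rc_in) // -entry_f //.
    exact/T_col/is_box_tableau_of.
split=> [||r c /is_box_tableau_of rc_in|r c /is_box_tableau_of rc_in];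
  first exact: has_shape_tableau_of.
- by move=> r c /is_box_tableau_of rc_in; rewrite entry_f //; exact: f_pos.
- by rewrite !entry_f ?(in_left _ _ rc_in) //; exact: f_row.
- by rewrite !entry_f ?(in_down _ _ rc_in) //; exact: f_col.
Qed.

Lemma is_SYT_tableau_of f : is_SYT la (tableau_of f) <-> syt_fun la f.
Proof.
rewrite /is_SYT /syt_fun flatten_tableau_of.
by split=> -[f_ssyt f_perm]; split=> //; exact/is_SSYT_tableau_of.
Qed.

Lemma is_quasi_yamanouchi_tableau_of f :
  is_quasi_yamanouchi (tableau_of f) <-> qy_fun la f.
Proof.
have entry_f r c : in_diagram (r, c) -> entry (tableau_of f) r c = f (r, c).
  exact: entry_tableau_of.
split=> [T_qy i lt1i [[a b] ab_in fab] | f_qy i lt1i [r [c [/is_box_tableau_of rc_in Trc]]]].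
  have [|r [c [/is_box_tableau_of rc_in Trc c_min [r' [c' [/is_box_tableau_of in' T' le_c]]]]]] :=
    T_qy i lt1i.
    by exists a, b; split; [exact/is_box_tableau_of | rewrite entry_f].
  exists (r, c); split=> [||[r2 c2] in2 f2|]; rewrite -?entry_f //.
  - by apply: (c_min r2 c2); [exact/is_box_tableau_of | rewrite entry_f].
  - by exists (r', c'); rewrite -?entry_f.
have [|[a b] [ab_in fab b_min [[a' b'] in' [f' le_b]]]] := f_qy i lt1i.
  by exists (r, c); rewrite -?entry_f.
exists a, b; split; rewrite ?entry_f //; first exact/is_box_tableau_of.
- by move=> r2 c2 /is_box_tableau_of in2; rewrite entry_f // => /(b_min _ in2).
- by exists a', b'; split=> //; [exact/is_box_tableau_of | rewrite entry_f].
Qed.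

Lemma eq_in_standardize f g : {in in_diagram, f =1 g} ->
  {in in_diagram, standardize la f =1 standardize la g}.
Proof.
move=> fg x x_in; congr S; apply: eq_in_count => y.
by rewrite mem_cells => y_in; rewrite /std_lt !fg.
Qed.

Lemma eq_in_destandardize f g : {in in_diagram, f =1 g} ->
  {in in_diagram, destandardize la f =1 destandardize la g}.
Proof.
move=> fg x x_in; congr S; rewrite /descents_below fg //.
apply: eq_in_count => y; rewrite mem_cells => y_in /=; rewrite fg //; congr andb.
by apply: eq_in_has => z; rewrite mem_cells => z_in; rewrite !fg.
Qed.

End Tableaux.

Definition standardize_tableau la T := tableau_of la (standardize la (entry_fun T)).

Definition destandardize_tableau la T := tableau_of la (destandardize la (entry_fun T)).

Section Bijection.
Variable la : seq nat.
Hypothesis la_partition : is_partition la.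

Lemma standardize_tableau_SYT T : is_SSYT la T -> is_SYT la (standardize_tableau la T).
Proof.
move=> T_ssyt; have [shT _ _ _] := T_ssyt; rewrite -(tableau_of_entry_fun shT) in T_ssyt.
exact/is_SYT_tableau_of/standardize_syt/is_SSYT_tableau_of.
Qed.

Lemma destandardize_tableau_QYT m T : (sumn la).+1 <= m + head 0 la ->
  is_SYT la T -> is_QYT_le m la (destandardize_tableau la T).
Proof.
move=> le_m T_syt; have [[shT _ _ _] _] := T_syt.
rewrite -(tableau_of_entry_fun shT) in T_syt.
move/(is_SYT_tableau_of la_partition): T_syt => S_syt.
split=> [||r c /is_box_tableau_of rc_in].
- exact/is_SSYT_tableau_of/destandardize_ssyt.
- exact/is_quasi_yamanouchi_tableau_of/destandardize_qy.
have le_head : head 0 la <= sumn la by case: (la) => //= a l; exact: leq_addr.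
rewrite entry_tableau_of //; have := destandardize_bound S_syt rc_in; lia.
Qed.

Lemma destandardize_tableauK T : is_SSYT la T -> is_quasi_yamanouchi T ->
  destandardize_tableau la (standardize_tableau la T) = T.
Proof.
move=> T_ssyt T_qy; have [shT _ _ _] := T_ssyt.
rewrite -[RHS](tableau_of_entry_fun shT); apply: eq_in_tableau_of => x x_in.
rewrite (@eq_in_destandardize la _ (standardize la (entry_fun T))) // => [|y y_in].
  rewrite -(tableau_of_entry_fun shT) in T_ssyt T_qy.
  apply: destandardize_standardize => //.
    exact/(is_SSYT_tableau_of la_partition).
  exact/is_quasi_yamanouchi_tableau_of.
by case: y y_in => r c y_in; rewrite /entry_fun entry_tableau_of.
Qed.

Lemma standardize_tableauK T : is_SYT la T ->
  standardize_tableau la (destandardize_tableau la T) = T.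
Proof.
move=> T_syt; have [[shT _ _ _] _] := T_syt.
rewrite -[RHS](tableau_of_entry_fun shT); apply: eq_in_tableau_of => x x_in.
rewrite (@eq_in_standardize la _ (destandardize la (entry_fun T))) // => [|y y_in].
  rewrite -(tableau_of_entry_fun shT) in T_syt.
  by apply: standardize_destandardize; [| exact/(is_SYT_tableau_of la_partition) |].
by case: y y_in => r c y_in; rewrite /entry_fun entry_tableau_of.
Qed.

End Bijection.

Theorem proposition3p2 (la : seq nat) (m : nat) :
  is_partition la ->
  (sumn la).+1 <= m + head 0 la ->
  exists f : {T : tableau | is_QYT_le m la T} -> {T : tableau | is_SYT la T},
    bijective f.
Proof.
move=> la_partition le_m.
have QYT_SSYT T : is_QYT_le m la T -> is_SSYT la T by case.
pose f (T : {T | is_QYT_le m la T}) : {T | is_SYT la T} :=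
  exist _ _ (standardize_tableau_SYT la_partition (QYT_SSYT _ (proj2_sig T))).
pose g (T : {T | is_SYT la T}) : {T | is_QYT_le m la T} :=
  exist _ _ (destandardize_tableau_QYT la_partition le_m (proj2_sig T)).
have sig_inj P (u v : {T : tableau | P T}) : proj1_sig u = proj1_sig v -> u = v.
  exact: (eq_sig_hprop (fun T => proof_irrelevance (P T))).
exists f, g => -[T T_prop]; apply: sig_inj => /=.
  by case: T_prop => T_ssyt T_qy _; exact: destandardize_tableauK.
exact: (standardize_tableauK la_partition T_prop).
Qed.
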